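(* Fix a noise variance $\sigma_W^2>0$ and let $\lambda_\gamma(0,1)$ be the Gittins index (defined in the context) of an arm with standard normal prior $N(0,1)$. Then \[ \lambda_\gamma(0,1)\le \sqrt{2\log\left(\frac{1}{1-\gamma}\right)}+o(1)\quad\text{as } \gamma\to1. \]
   Context: One-armed Gaussian bandit: the arm has unknown quality $\theta\sim N(\mu,\sigma^2)$ (the prior), and conditional on $\theta$ the rewards $R_0,R_1,R_2,\ldots$ are i.i.d. $N(\theta,\sigma_W^2)$, where $\sigma_W^2>0$ is a fixed noise variance. Let $\mathcal{H}_t$ be the $\sigma$-algebra generated by $R_0,\ldots,R_{t-1}$ ($\mathcal{H}_0$ trivial). For a discount factor $\gamma\in(0,1)$ and a tax $\lambda\in\mathbb{R}$, define \[ V_\gamma^\lambda(\mu,\sigma)=\sup_{\tau\ge 1}\mathbb{E}\Big[\sum_{t=0}^{\tau}\gamma^t(\theta-\lambda)\Big], \] where the supremum is over stopping times $\tau\ge 1$ (possibly infinite) with respect to the filtration $(\mathcal{H}_t)_{t\ge0}$, and the expectation is under the model with prior $N(\mu,\sigma^2)$. The Gittins index is $\lambda_\gamma(\mu,\sigma^2)=\sup\{\lambda\in\mathbb{R} : V_\gamma^\lambda(\mu,\sigma)\ge 0\}$. Here $\mu=0$, $\sigma^2=1$. *)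

From HB Require Import structures.
From mathcomp Require Import all_boot all_order all_algebra.
From mathcomp Require Import all_classical all_reals all_analysis.
Set Implicit Arguments. Unset Strict Implicit. Unset Printing Implicit Defensive.
Import Order.TTheory GRing.Theory Num.Theory.
Import numFieldNormedType.Exports.
Local Open Scope classical_set_scope.
Local Open Scope ring_scope.

Section gittins.
Context {R : realType} {d : measure_display} {Omega : measurableType d}.
Variable P : probability Omega R.
Variables (theta : Omega -> R) (Rw : nat -> Omega -> R).

(* One-armed Gaussian bandit model: theta ~ N(mu, sigma^2) (sigma = std dev),
   and conditionally on theta the rewards R_0, R_1, ... are i.i.d. N(theta, sW^2)
   (sW = std dev).  The joint law of (theta, R_0, ..., R_{n-1}) is prescribed
   on all measurable rectangles, for every n, which determines it. *)
Definition gauss_bandit_model (mu sigma sW : R) : Prop :=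
  measurable_fun setT theta /\ (forall t, measurable_fun setT (Rw t)) /\
  forall (n : nat) (A : set R) (B : nat -> set R),
    measurable A -> (forall i, measurable (B i)) ->
    P [set w | A (theta w) /\ forall i, (i < n)%N -> B i (Rw i w)] =
    (\int[normal_prob mu sigma]_(x in A)
        \prod_(i < n) normal_prob x sW (B i))%E.

Definition history (t : nat) : set (set Omega) :=
  <<s [set E | exists i B, (i < t)%N /\ measurable B /\ E = Rw i @^-1` B] >>.

(* Stopping times tau >= 1 w.r.t. (H_t), possibly infinite (None = +oo). *)
Definition stopping_time_ge1 (tau : Omega -> option nat) : Prop :=
  (forall w, tau w <> Some 0%N) /\
  forall t : nat, history t [set w | exists s, tau w = Some s /\ (s <= t)%N].

Definition disc_payoff (gamma lambda : R) (tau : Omega -> option nat)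
    (w : Omega) : \bar R :=
  match tau w with
  | Some n => (\sum_(0 <= t < n.+1) (gamma ^+ t * (theta w - lambda))%:E)%E
  | None => (\sum_(t <oo) (gamma ^+ t * (theta w - lambda))%:E)%E
  end.

Definition gittins_value (gamma lambda : R) : \bar R :=
  ereal_sup [set (\int[P]_w disc_payoff gamma lambda tau w)%E
            | tau in stopping_time_ge1].

Definition gittins_index (gamma : R) : \bar R :=
  ereal_sup [set lambda%:E | lambda in [set l : R | (0 <= gittins_value gamma l)%E]].

End gittins.

From HB Require Import structures.
From mathcomp Require Import all_boot all_order all_algebra.
From mathcomp Require Import all_classical all_reals all_analysis.
From mathcomp Require Import measurable_realfun ring lra.
Import Order.TTheory GRing.Theory Num.Theory.
Import numFieldNormedType.Exports.
Local Open Scope classical_set_scope.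
Local Open Scope ring_scope.

(* Whatever the stopping rule, the discounted payoff is (theta - lambda) q for
   some 1 <= q <= 1/(1 - gamma).  For a standard normal theta and lambda >= 2,
   E[(theta - lambda)^+] <= exp(-lambda^2/2), while theta < 3 with probability
   at least 3/4, where the payoff loses at least 1 once lambda >= 4.  Hence
   V_gamma^lambda <= exp(-lambda^2/2)/(1 - gamma) - 3/4 < 0 as soon as
   lambda^2 > 2 log(1/(1 - gamma)) + 16, so that
   lambda_gamma(0,1) <= sqrt(2 log(1/(1 - gamma)) + 16), and
   sqrt(y + 16) - sqrt y tends to 0 as y tends to +oo. *)

Section real_bounds.
Context {R : realType}.

Lemma expR2_ge4 : (4 : R) <= expR 2.
Proof.
have e1 : (2 : R) <= expR 1 by have := expR_ge1Dx (1 : R); lra.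
have e0 := expR_ge0 (1 : R).
by rewrite (_ : 2 = 1 + 1) // expRD; nra.
Qed.

Lemma nneseries_geometric_half_le (c : R) : 0 <= c ->
  (\sum_(j <oo) (c * 2^-1 ^+ j)%:E <= (2 * c)%:E)%E.
Proof.
move=> c0; apply: lime_le.
  by apply: is_cvg_nneseries => j _ _; rewrite lee_fin mulr_ge0 ?exprn_ge0.
near=> n; rewrite sumEFin lee_fin.
have : series (geometric c 2^-1) n <= c * (1 - 2^-1)^-1.
  by apply: geometric_le_lim; rewrite ?invr_gt0 ?ger0_norm //; lra.
by rewrite /series /= (_ : (1 - 2^-1)^-1 = 2 :> R) 1?mulrC //; field.
Unshelve. all: by end_near. Qed.

Lemma sqrtrD_subr_cvg0 (c : R) : 0 <= c ->
  (Num.sqrt (y + c) - Num.sqrt y) @[y --> +oo] --> (0 : R).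
Proof.
move=> c0; apply/cvgrPdist_lt => e e0.
have ce : c / e * e = c by rewrite divfK ?gt_eqF.
have ce0 : 0 <= c / e by rewrite divr_ge0 // ltW.
near=> y.
have yc : (c / e) ^+ 2 < y by near: y; apply: nbhs_pinfty_gt; rewrite num_real.
have y0 : 0 <= y by apply: le_trans (ltW yc); rewrite sqr_ge0.
set s1 := Num.sqrt (y + c); set s0 := Num.sqrt y.
have s1sq : s1 ^+ 2 = y + c by rewrite sqr_sqrtr //; lra.
have s0sq : s0 ^+ 2 = y by rewrite sqr_sqrtr.
have s0s1 : s0 <= s1 by rewrite ler_sqrt; lra.
have s0g : 0 <= s0 := sqrtr_ge0 _.
rewrite expr2 in s1sq s0sq yc.
have s1gt : c / e < s1 by nra.
by rewrite sub0r normrN ger0_norm ?subr_ge0 //; nra.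
Unshelve. all: by end_near. Qed.

Lemma ln_inv_1B_cvgy : ln ((1 - x)^-1) @[x --> (1 : R)^'-] --> +oo.
Proof.
apply/cvgryPgt => A; near=> x.
have x1 : x < 1 by near: x; exact: nbhs_left_lt.
have xA : 1 - expR (- A) < x.
  by near: x; apply: nbhs_left_gt; have := expR_gt0 (- A); lra.
rewrite -ltr_expR lnK; last by rewrite posrE invr_gt0 subr_gt0.
rewrite -[expR A]invrK ltf_pV2 ?posrE ?invr_gt0 ?expR_gt0 ?subr_gt0 //.
by rewrite -expRN; lra.
Unshelve. all: by end_near. Qed.

End real_bounds.

Section ge0_le_integralT.
Context {d} {T : measurableType d} {R : realType}.
Variable mu : {measure set T -> \bar R}.
Local Open Scope ereal_scope.

(* Unlike [ge0_le_integral], no measurability is required: the integral of a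
   nonnegative function is the supremum of the simple functions below it. *)
Lemma ge0_le_integralT (f g : T -> \bar R) :
  (forall x, 0 <= f x) -> (forall x, f x <= g x) ->
  \int[mu]_x f x <= \int[mu]_x g x.
Proof.
move=> f0 fg; have g0 x : 0 <= g x by apply: le_trans (fg x).
rewrite !ge0_integralTE //; apply: ereal_sup_le => _ [h hf <-].
by exists h => // x; apply: le_trans (hf x) (fg x).
Qed.

End ge0_le_integralT.

Section normal_interval_bounds.
Context {R : realType}.

Lemma normal_peak1_le_half : normal_peak (1 : R) <= 2^-1.
Proof.
rewrite /normal_peak expr1n mul1r.
have sqrt2pi : (2 : R) <= Num.sqrt (pi *+ 2).
  have -> : (2 : R) = Num.sqrt (2 ^+ 2) by rewrite sqrtr_sqr ger0_norm.
  rewrite ler_sqrt; last exact: (mulrn_wge0 _ (pi_ge0 R)).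
  by have := @pi_ge2 R; rewrite -mulr_natr; lra.
by rewrite lef_pV2 ?posrE //; lra.
Qed.

Lemma normal_prob_itv_le (b : R) : 0 <= b ->
  (normal_prob 0 1 [set` `[b, (b + 1)%R[] <= (2^-1 * expR (- b ^+ 2 / 2))%:E)%E.
Proof.
move=> b0; rewrite /normal_prob.
apply: (@le_trans _ _ (\int[lebesgue_measure]_(x in [set` `[b, (b + 1)%R[])
  cst (2^-1 * expR (- b ^+ 2 / 2))%R%:E x)%E).
  apply: ge0_le_integral => //.
  - by move=> x _; rewrite lee_fin normal_pdf_ge0.
  - apply/measurable_EFinP/measurable_funTS; exact: measurable_normal_pdf.
  - move=> x /=; rewrite in_itv /= => /andP[bx _].
    rewrite lee_fin /normal_pdf oner_eq0 /=.
    apply: ler_pM; [exact: normal_peak_ge0|exact: normal_fun_ge0|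
                    exact: normal_peak1_le_half|].
    rewrite /normal_fun ler_expR subr0 expr1n.
    have : b ^+ 2 <= x ^+ 2 by rewrite ler_sqr ?nnegrE; lra.
    lra.
rewrite integral_cst //= lebesgue_measure_itv /= lte_fin ltrDl ltr01 /=.
by rewrite -EFinD addrAC subrr add0r mule1.
Qed.

(* The weight j+1 <= 2^j is beaten by the Gaussian decay exp(-2j) <= 4^-j. *)
Lemma normal_prob_shifted_itv_le (a : R) (j : nat) : 2 <= a ->
  (j.+1%:R%:E * normal_prob 0 1 [set` `[(a + j%:R)%R, (a + j%:R + 1)%R[]
   <= (2^-1 * expR (- a ^+ 2 / 2) * 2^-1 ^+ j)%:E)%E.
Proof.
move=> a2; have j0 : (0 : R) <= j%:R by [].
have b0 : 0 <= a + j%:R by lra.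
apply: le_trans (lee_wpmul2l _ (normal_prob_itv_le _ b0)) _; first by rewrite lee_fin.
rewrite -EFinM lee_fin.
have decay : expR (- (a + j%:R) ^+ 2 / 2) <= expR (- a ^+ 2 / 2) * 4^-1 ^+ j.
  apply: (@le_trans _ _ (expR (- a ^+ 2 / 2) * expR (- 2) ^+ j)).
    by rewrite -expRM_natl -expRD ler_expR; nra.
  apply: ler_wpM2l; first exact: expR_ge0.
  apply: lerXn2r; rewrite ?nnegrE ?expR_ge0 //.
  by rewrite expRN lef_pV2 ?posrE ?expR_gt0 //; exact: expR2_ge4.
have weight : j.+1%:R <= 2 ^+ j :> R by rewrite -natrX ler_nat ltn_expl.
have := ler_pM (ler0n _ _) (expR_ge0 _) weight decay.
have -> : 2^-1 ^+ j = 2 ^+ j * 4^-1 ^+ j :> R.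
  by rewrite -exprMn; congr (_ ^+ _); field.
lra.
Qed.

End normal_interval_bounds.

Section standard_normal_excess.
Context {R : realType} {d : measure_display} {T : measurableType d}.
Variables (P : probability T R) (X : T -> R).
Hypothesis mX : measurable_fun setT X.
Hypothesis lawX : forall A, measurable A -> P (X @^-1` A) = normal_prob 0 1 A.

Let measurable_preimage A : measurable A -> measurable (X @^-1` A).
Proof. by move=> mA; rewrite -[X @^-1` A]setTI; exact: mX. Qed.

(* A majorant of the excess (X - a)^+ whose integral is a series of Gaussian
   probabilities of unit intervals. *)
Definition excess_staircase (a : R) (w : T) : \bar R :=
  (\sum_(j <oo) (j.+1%:R * \1_(X @^-1` [set` `[a + j%:R, a + j%:R + 1[]) w)%:E)%E.

Lemma excess_staircase_ge a w :
  ((Num.max (X w - a) 0)%:E <= excess_staircase a w)%E.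
Proof.
have term_ge0 j :
    (0 <= (j.+1%:R * \1_(X @^-1` [set` `[a + j%:R, a + j%:R + 1[]) w : R)%:E)%E.
  by rewrite lee_fin mulr_ge0.
have [aX|Xa] := leP a (X w); last first.
  rewrite max_r; last by rewrite subr_le0 ltW.
  by apply: nneseries_ge0 => j _ _; exact: term_ge0.
rewrite max_l ?subr_ge0 // /excess_staircase.
set j := Num.truncn (X w - a).
have /andP[jle jlt] : j%:R <= X w - a < j.+1%:R by apply: truncn_itv; rewrite subr_ge0.
apply: le_trans (nneseries_lim_ge j.+1 _) => //.
rewrite big_nat_recr //= indicE mem_set; last first.
  by rewrite /= in_itv /=; apply/andP; split; lra.
apply: (@le_trans _ _ j.+1%:R%:E); first by rewrite lee_fin; lra.
by rewrite mulr1; apply: leeDr; exact: sume_ge0.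
Qed.

Lemma integral_excess_staircase_le a : 2 <= a ->
  (\int[P]_w excess_staircase a w <= (expR (- a ^+ 2 / 2))%:E)%E.
Proof.
move=> a2; have slab j : measurable (X @^-1` [set` `[a + j%:R, a + j%:R + 1[]).
  by apply: measurable_preimage; exact: measurable_itv.
rewrite integral_nneseries //; last first.
  by move=> j; apply/measurable_EFinP/measurable_funM => //; exact: measurable_indic (slab j).
apply: (@le_trans _ _ (\sum_(j <oo) (2^-1 * expR (- a ^+ 2 / 2) * 2^-1 ^+ j)%:E)%E).
  apply: lee_nneseries => [j _ _|j _].
    by apply: integral_ge0 => w _; rewrite lee_fin mulr_ge0.
  under eq_integral do rewrite EFinM.
  rewrite ge0_integralZl_EFin //; last first.
    by apply/measurable_EFinP; exact: measurable_indic (slab j).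
  rewrite integral_indic // setIT.
  by move: (normal_prob_shifted_itv_le a j a2); rewrite -lawX //; exact: measurable_itv.
have c0 : 0 <= 2^-1 * expR (- a ^+ 2 / 2) :> R by rewrite mulr_ge0 ?expR_ge0.
apply: le_trans (nneseries_geometric_half_le _ c0) _.
by rewrite lee_fin mulrA divff // mul1r.
Qed.

Lemma integral_excess_le a : 2 <= a ->
  (\int[P]_w (Num.max (X w - a) 0)%:E <= (expR (- a ^+ 2 / 2))%:E)%E.
Proof.
move=> a2; apply: le_trans (integral_excess_staircase_le _ a2).
apply: ge0_le_integralT => w; last exact: excess_staircase_ge.
by rewrite lee_fin le_max lexx orbT.
Qed.

Lemma prob_lt_ge a : 2 <= a ->
  ((1 - expR (- a ^+ 2 / 2))%:E <= P (X @^-1` [set` `]-oo, (a + 1)%R[]))%E.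
Proof.
move=> a2; have mU : measurable (X @^-1` [set` `[a + 1, +oo[]).
  by apply: measurable_preimage; exact: measurable_itv.
have -> : X @^-1` [set` `]-oo, a + 1[] = ~` (X @^-1` [set` `[a + 1, +oo[]).
  by apply/seteqP; split => w /=; rewrite !in_itv /= ?andbT; lra.
rewrite probability_setC // EFinB; apply: leeB => //.
rewrite -[X @^-1` _]setIT -integral_indic //.
apply: le_trans (integral_excess_le _ a2); apply: ge0_le_integralT => w.
  by rewrite lee_fin.
rewrite indicE lee_fin; case: (boolP (w \in _)) => [/set_mem/=|_].
  by rewrite in_itv /= andbT le_max => aX; apply/orP; left; lra.
by rewrite le_max lexx orbT.
Qed.

End standard_normal_excess.

Section disc_payoff_bounds.
Context {R : realType} {d : measure_display} {Omega : measurableType d}.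
Variable theta : Omega -> R.

Lemma disc_payoff_scaled (g l : R) tau w : 0 < g < 1 ->
  exists2 q, 1 <= q <= (1 - g)^-1 &
    disc_payoff theta g l tau w = ((theta w - l) * q)%:E.
Proof.
move=> /andP[g0 g1]; have g1' : `|g| < 1 by rewrite ger0_norm ?ltW.
rewrite /disc_payoff; case: (tau w) => [n|].
- exists (\sum_(0 <= t < n.+1) g ^+ t).
    apply/andP; split.
      rewrite big_nat_recl //= expr0 lerDl; apply: sumr_ge0 => t _.
      exact/exprn_ge0/ltW.
    have := @geometric_le_lim R n.+1 1 g ler01 g0 g1'.
    by rewrite mul1r /series /=; under eq_bigr do rewrite mul1r.
  by rewrite sumEFin mulr_sumr; congr (_%:E); apply: eq_bigr => t _; rewrite mulrC.
- exists (1 - g)^-1; first by rewrite lexx andbT invf_ge1 ?subr_gt0; lra.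
  apply: cvg_lim => //; apply/fine_cvgP; split; first by near=> n; rewrite sumEFin.
  have -> : fine \o (fun n => \sum_(0 <= t < n) (g ^+ t * (theta w - l))%:E)%E =
      series (geometric (theta w - l) g).
    apply/funext => n /=; rewrite sumEFin /= /series /=.
    by apply: eq_bigr => t _; rewrite mulrC.
  exact: cvg_geometric_series.
Unshelve. all: by end_near. Qed.

Lemma disc_payoff_funepos_le (g l : R) tau w : 0 < g < 1 ->
  ((disc_payoff theta g l tau)^\+ w <=
    ((1 - g)^-1 * Num.max (theta w - l) 0)%:E)%E.
Proof.
move=> g01; have [_ g1] := andP g01.
have K0 : 0 <= (1 - g)^-1 by rewrite invr_ge0 subr_ge0 ltW.
rewrite funeposE; have [q /andP[q1 qK] ->] := disc_payoff_scaled g l tau w g01.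
rewrite -EFin_max lee_fin ge_max mulr_ge0 ?le_max ?lexx ?orbT // andbT.
have [lt|tl] := leP l (theta w).
  by rewrite max_l ?subr_ge0 // [X in _ <= X]mulrC ler_wpM2l // subr_ge0.
rewrite max_r; last by rewrite subr_le0 ltW.
by rewrite mulr0 nmulr_rle0 ?subr_lt0 //; lra.
Qed.

Lemma disc_payoff_funeneg_ge (g l : R) tau w : 0 < g < 1 -> theta w + 1 < l ->
  (1 <= (disc_payoff theta g l tau)^\- w)%E.
Proof.
move=> g01 low; rewrite funenegE.
have [q /andP[q1 qK] ->] := disc_payoff_scaled g l tau w g01.
by rewrite -EFinN -EFin_max lee_fin le_max; apply/orP; left; nra.
Qed.

End disc_payoff_bounds.

Lemma gauss_bandit_model_prior {R : realType} {d : measure_display}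
    {Omega : measurableType d} (P : probability Omega R) (theta : Omega -> R)
    (Rw : nat -> Omega -> R) (mu sigma sW : R) :
  gauss_bandit_model P theta Rw mu sigma sW ->
  measurable_fun setT theta /\
  forall A, measurable A -> P (theta @^-1` A) = normal_prob mu sigma A.
Proof.
case=> mtheta [_ joint]; split => // A mA.
have := joint 0%N A (fun=> setT) mA (fun=> measurableT).
rewrite (_ : [set w | _] = theta @^-1` A); last first.
  by apply/seteqP; split => w /=; [case|].
move=> ->; under eq_integral do rewrite big_ord0.
by rewrite integral_cst // mul1e.
Qed.

Section gittins_standard_normal_prior.
Context {R : realType} {d : measure_display} {Omega : measurableType d}.
Variables (P : probability Omega R) (theta : Omega -> R) (Rw : nat -> Omega -> R).
Hypothesis mtheta : measurable_fun setT theta.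
Hypothesis law_theta :
  forall A, measurable A -> P (theta @^-1` A) = normal_prob 0 1 A.

Lemma integral_disc_payoff_funepos_le (g l : R) tau : 0 < g < 1 -> 2 <= l ->
  (\int[P]_w (disc_payoff theta g l tau)^\+ w <=
    ((1 - g)^-1 * expR (- l ^+ 2 / 2))%:E)%E.
Proof.
move=> g01 l2; have [_ g1] := andP g01.
have K0 : 0 <= (1 - g)^-1 by rewrite invr_ge0 subr_ge0 ltW.
apply: (@le_trans _ _ (\int[P]_w ((1 - g)^-1 * Num.max (theta w - l) 0)%:E)%E).
  apply: ge0_le_integralT => w; first exact: funepos_ge0.
  exact: disc_payoff_funepos_le.
under eq_integral do rewrite EFinM.
rewrite ge0_integralZl_EFin //.
- rewrite EFinM; apply: lee_wpmul2l; first by rewrite lee_fin.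
  exact: (integral_excess_le _ _ mtheta law_theta).
- by move=> w _; rewrite lee_fin le_max lexx orbT.
- by apply/measurable_EFinP/measurable_maxr => //; exact: measurable_funB.
Qed.

Lemma integral_disc_payoff_funeneg_ge (g l : R) tau : 0 < g < 1 -> 4 <= l ->
  ((3 / 4)%:E <= \int[P]_w (disc_payoff theta g l tau)^\- w)%E.
Proof.
move=> g01 l4; have mlow : measurable (theta @^-1` [set` `]-oo, 2 + 1[]).
  by rewrite -[_ @^-1` _]setTI; apply: mtheta => //; exact: measurable_itv.
apply: (@le_trans _ _ (P (theta @^-1` [set` `]-oo, 2 + 1[]))).
  apply: le_trans (prob_lt_ge _ _ mtheta law_theta 2 _) => //.
  rewrite lee_fin (_ : - 2 ^+ 2 / 2 = - 2 :> R); last by field.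
  have : expR (- 2) <= 4^-1 :> R.
    by rewrite expRN lef_pV2 ?posrE ?expR_gt0 //; exact: expR2_ge4.
  lra.
rewrite -[theta @^-1` _]setIT -integral_indic //; apply: ge0_le_integralT => w.
  by rewrite lee_fin.
rewrite indicE; case: (boolP (w \in _)) => [/set_mem/=|_]; last exact: funeneg_ge0.
by rewrite in_itv /= => low; apply: disc_payoff_funeneg_ge => //; lra.
Qed.

Lemma integral_disc_payoff_le (g l : R) tau : 0 < g < 1 -> 4 <= l ->
  (\int[P]_w disc_payoff theta g l tau w <=
    ((1 - g)^-1 * expR (- l ^+ 2 / 2))%:E - (3 / 4)%:E)%E.
Proof.
move=> g01 l4; rewrite integralE; apply: leeB.
  by apply: integral_disc_payoff_funepos_le => //; lra.
exact: integral_disc_payoff_funeneg_ge.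
Qed.

Lemma gittins_value_lt0 (g l : R) : 0 < g < 1 -> 4 <= l ->
  (1 - g)^-1 * expR (- l ^+ 2 / 2) < 3 / 4 ->
  (gittins_value P theta Rw g l < 0)%E.
Proof.
move=> g01 l4 small.
apply: (@le_lt_trans _ _ (((1 - g)^-1 * expR (- l ^+ 2 / 2))%:E - (3 / 4)%:E)%E).
  by apply: ge_ereal_sup => _ [tau _ <-]; exact: integral_disc_payoff_le.
by rewrite -EFinB lte_fin; lra.
Qed.

Lemma gittins_index_le (g : R) : 0 < g < 1 ->
  (gittins_index P theta Rw g <= (Num.sqrt (2 * ln ((1 - g)^-1) + 16))%:E)%E.
Proof.
move=> g01; have [g0 g1] := andP g01.
apply: ge_ereal_sup => _ [l value_ge0 <-]; rewrite lee_fin leNgt; apply/negP => sl.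
set L := ln ((1 - g)^-1) in sl.
have L0 : 0 <= L by rewrite ln_ge0 // invf_ge1 ?subr_gt0; lra.
set s := Num.sqrt (2 * L + 16) in sl.
have ssq : s * s = 2 * L + 16 by rewrite -expr2 sqr_sqrtr //; lra.
have s0 : 0 <= s := sqrtr_ge0 _.
have l4 : 4 <= l by nra.
have ll : 2 * L + 16 < l ^+ 2 by rewrite expr2; nra.
move: value_ge0; apply/negP; rewrite /= -ltNge; apply: gittins_value_lt0 => //.
have eL : expR (- L) = 1 - g by rewrite expRN lnK ?invrK // posrE invr_gt0 subr_gt0.
have decay : expR (- l ^+ 2 / 2) < (1 - g) * expR (- 8).
  by rewrite -eL -expRD ltr_expR; lra.
have e8 : expR (- 8) < 3 / 4 :> R.
  rewrite expRN -[X in _ < X]invrK ltf_pV2 ?posrE ?expR_gt0 //.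
  by have := expR_ge1Dx (8 : R); lra.
have K0 : 0 < (1 - g)^-1 by rewrite invr_gt0 subr_gt0.
rewrite -(ltr_pM2l K0) mulrA mulVf ?mul1r in decay; last by rewrite subr_eq0 gt_eqF.
lra.
Qed.

End gittins_standard_normal_prior.

Theorem lemma4 (R : realType) (d : measure_display) (Omega : measurableType d)
    (P : probability Omega R) (theta : Omega -> R) (Rw : nat -> Omega -> R)
    (sW : R) :
  0 < sW ->
  gauss_bandit_model P theta Rw 0 1 sW ->
  exists e : R -> R,
    (e x @[x --> 1^'-] --> 0) /\
    forall gamma : R, 0 < gamma < 1 ->
      (gittins_index P theta Rw gamma <=
        (Num.sqrt (2 * ln ((1 - gamma)^-1)) + e gamma)%:E)%E.
Proof.
move=> _ /gauss_bandit_model_prior[mtheta law_theta].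
pose L (x : R) := 2 * ln ((1 - x)^-1).
exists (fun x => Num.sqrt (L x + 16) - Num.sqrt (L x)); split.
  have Lcvg : L x @[x --> 1^'-] --> +oo.
    exact: (@gt0_cvgMry _ _ _ 2 _ _ ln_inv_1B_cvgy).
  exact: (cvg_comp _ _ Lcvg (sqrtrD_subr_cvg0 _ (ler0n R 16))).
move=> g g01; rewrite addrC subrK.
exact: gittins_index_le.
Qed.
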